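(* Let $D>0$ be a square-free integer, let $p$ be an odd prime with $\left(\frac{-D}{p}\right)=1$, and let $\alpha\ge 1$ be an integer. Let $x_0,y_0$ be integers with $\gcd(x_0,y_0)=1$ and $x_0^2+Dy_0^2=p^{2\alpha}$. Suppose $c,d$ are integers with $\gcd(c,d)=1$ and $p^{2\alpha}\mid c^2+Dd^2$. Then exactly one of the following holds in $\mathbb{Z}[\sqrt{-D}]$: $x_0+y_0\sqrt{-D}\mid c+d\sqrt{-D}$, or $x_0-y_0\sqrt{-D}\mid c+d\sqrt{-D}$.
   Context: $\left(\frac{\cdot}{p}\right)$ is the Legendre symbol. *)

From Stdlib Require Import ZArith Znumtheory List.
Open Scope Z_scope.

Definition squarefree (D : Z) : Prop :=
  forall k : Z, (k * k | D) -> Z.abs k = 1.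

Definition legendre (a p : Z) : Z :=
  if a mod p =? 0 then 0
  else if existsb (fun x => (x * x - a) mod p =? 0)
                  (map Z.of_nat (seq 0 (Z.to_nat p)))
       then 1 else -1.

(* Divisibility in Z[sqrt(-D)]: (a + b sqrt(-D)) | (c + d sqrt(-D)) iff
   there is u + v sqrt(-D) in Z[sqrt(-D)] with
   (a + b sqrt(-D)) (u + v sqrt(-D)) = c + d sqrt(-D). *)
Definition zsqrt_divides (D a b c d : Z) : Prop :=
  exists u v : Z, c = a * u - D * b * v /\ d = a * v + b * u.

From Stdlib Require Import ZArith Znumtheory Zpow_facts Lia.
Open Scope Z_scope.

(* Write N = p^(2 alpha) = x0^2 + D y0^2 and A(+/-) = c x0 +/- D d y0.
   Multiplying by the conjugate shows that x0 +/- y0 sqrt(-D) divides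
   c + d sqrt(-D) iff N divides A(+/-).  The product A(+) A(-) equals
   x0^2 (c^2 + D d^2) - D d^2 N, so N divides it; but p cannot divide both
   factors, since their sum 2 c x0 is prime to p (p is odd, and p divides
   neither c nor x0 because it does not divide D, as (-D/p) <> 0).  Hence the whole prime
   power N divides exactly one of A(+), A(-). *)

Lemma zsqrt_divides_iff_norm_divides (D x y c d : Z) :
  x ^ 2 + D * y ^ 2 <> 0 -> rel_prime (x ^ 2 + D * y ^ 2) x ->
  zsqrt_divides D x y c d <-> (x ^ 2 + D * y ^ 2 | c * x + D * d * y).
Proof.
  set (N := x ^ 2 + D * y ^ 2). intros HN0 HNx. split.
  - intros [u [v [-> ->]]]. exists u. unfold N. ring.
  - intros [k Hk].
    assert (Hm : (N | d * x - c * y)).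
    { apply Gauss with x; [|exact HNx].
      exists (d - y * k).
      replace (x * (d * x - c * y)) with (d * N - y * (c * x + D * d * y))
        by (unfold N; ring).
      rewrite Hk. ring. }
    destruct Hm as [m Hm].
    exists k, m. split; apply Z.mul_reg_l with N; trivial.
    + replace (N * (x * k - D * y * m)) with (x * (k * N) - D * y * (m * N)) by ring.
      rewrite <- Hk, <- Hm. unfold N. ring.
    + replace (N * (x * m + y * k)) with (x * (m * N) + y * (k * N)) by ring.
      rewrite <- Hk, <- Hm. unfold N. ring.
Qed.

Lemma legendre_eq1_not_divides (a p : Z) : legendre a p = 1 -> ~ (p | a).
Proof.
  intros Hleg Hpa. unfold legendre in Hleg.
  rewrite (Zdivide_mod a p Hpa) in Hleg. discriminate.
Qed.

Lemma prime_divides_coprime_norm_not_divides (p D a b : Z) :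
  prime p -> ~ (p | D) -> Z.gcd a b = 1 ->
  (p | a ^ 2 + D * b ^ 2) -> ~ (p | a).
Proof.
  intros Hp HpD Hab Hnorm Hpa.
  assert (HDbb : (p | D * (b * b))).
  { replace (D * (b * b)) with ((a ^ 2 + D * b ^ 2) - a * a) by ring.
    apply Z.divide_sub_r; [exact Hnorm | now apply Z.divide_mul_l]. }
  assert (Hpb : (p | b)).
  { destruct (prime_mult p Hp _ _ HDbb) as [|Hbb]; [contradiction|].
    now destruct (prime_mult p Hp _ _ Hbb). }
  pose proof (Z.gcd_greatest a b p Hpa Hpb) as Hp1.
  rewrite Hab in Hp1. apply Z.divide_1_r in Hp1.
  pose proof (prime_ge_2 p Hp). lia.
Qed.

Lemma norm_divides_conjugate_product (D x y c d : Z) :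
  (x ^ 2 + D * y ^ 2 | c ^ 2 + D * d ^ 2) ->
  (x ^ 2 + D * y ^ 2 | (c * x + D * d * y) * (c * x - D * d * y)).
Proof.
  intros H.
  replace ((c * x + D * d * y) * (c * x - D * d * y))
    with (x ^ 2 * (c ^ 2 + D * d ^ 2) - D * d ^ 2 * (x ^ 2 + D * y ^ 2)) by ring.
  apply Z.divide_sub_r; [now apply Z.divide_mul_r | apply Z.divide_factor_r].
Qed.

Lemma odd_prime_not_divides_sum_and_diff (p u v : Z) :
  prime p -> p <> 2 -> ~ (p | u) -> ~ ((p | u + v) /\ (p | u - v)).
Proof.
  intros Hp Hp2 Hpu [Hplus Hminus].
  assert (H2u : (p | 2 * u)).
  { replace (2 * u) with ((u + v) + (u - v)) by ring. now apply Z.divide_add_r. }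
  pose proof (prime_ge_2 p Hp).
  destruct (prime_mult p Hp _ _ H2u) as [H2|]; [|contradiction].
  apply Z.divide_pos_le in H2; lia.
Qed.

Lemma prime_power_rel_prime (p e a : Z) :
  prime p -> 0 <= e -> ~ (p | a) -> rel_prime (p ^ e) a.
Proof.
  intros Hp He Hpa. apply rel_prime_sym, rel_prime_Zpower_r; [exact He|].
  apply rel_prime_sym. now apply prime_rel_prime.
Qed.

Lemma prime_power_divides_mul_r (p e a b : Z) :
  prime p -> 0 <= e -> ~ (p | a) -> (p ^ e | a * b) -> (p ^ e | b).
Proof.
  intros Hp He Hpa Hab. apply Gauss with a; [exact Hab|].
  now apply prime_power_rel_prime.
Qed.

Lemma prime_power_divides_exactly_one (p e a b : Z) :
  prime p -> 0 < e -> (p ^ e | a * b) -> ~ ((p | a) /\ (p | b)) ->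
  ((p ^ e | a) /\ ~ (p ^ e | b)) \/ (~ (p ^ e | a) /\ (p ^ e | b)).
Proof.
  intros Hp He Hab Hnboth.
  pose proof (Zpower_divide p e He) as Hp_pe.
  destruct (Zdivide_dec p a) as [Hpa|Hpa].
  - assert (Hpb : ~ (p | b)) by tauto.
    left. split.
    + apply prime_power_divides_mul_r with b; [trivial | lia | trivial |].
      now rewrite Z.mul_comm.
    + intros Hpe. apply Hpb. now apply Z.divide_trans with (p ^ e).
  - right. split.
    + intros Hpe. apply Hpa. now apply Z.divide_trans with (p ^ e).
    + apply prime_power_divides_mul_r with a; [trivial | lia | trivial | trivial].
Qed.

Theorem lemma3p4 (D p alpha x0 y0 c d : Z) :
  0 < D -> squarefree D ->
  prime p -> p <> 2 -> legendre (- D) p = 1 ->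
  1 <= alpha ->
  Z.gcd x0 y0 = 1 -> x0 ^ 2 + D * y0 ^ 2 = p ^ (2 * alpha) ->
  Z.gcd c d = 1 -> (p ^ (2 * alpha) | c ^ 2 + D * d ^ 2) ->
  (zsqrt_divides D x0 y0 c d /\ ~ zsqrt_divides D x0 (- y0) c d) \/
  (~ zsqrt_divides D x0 y0 c d /\ zsqrt_divides D x0 (- y0) c d).
Proof.
  intros _ _ Hp Hp2 Hleg Halpha Hxy Hnorm Hcd Hdiv.
  assert (HpD : ~ (p | D))
    by (intros HpD; apply (legendre_eq1_not_divides _ _ Hleg); now apply Z.divide_opp_r).
  assert (Hp_N : (p | p ^ (2 * alpha))) by (apply Zpower_divide; lia).
  assert (Hpx : ~ (p | x0))
    by (apply (prime_divides_coprime_norm_not_divides p D x0 y0); rewrite ?Hnorm; trivial).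
  assert (Hpc : ~ (p | c))
    by (apply (prime_divides_coprime_norm_not_divides p D c d); trivial;
        now apply Z.divide_trans with (p ^ (2 * alpha))).
  assert (HN0 : p ^ (2 * alpha) <> 0)
    by (pose proof (prime_ge_2 p Hp); apply Z.pow_nonzero; lia).
  assert (HNx : rel_prime (p ^ (2 * alpha)) x0)
    by (apply prime_power_rel_prime; trivial; lia).
  assert (Hnorm' : x0 ^ 2 + D * (- y0) ^ 2 = p ^ (2 * alpha)) by (rewrite <- Hnorm; ring).
  rewrite (zsqrt_divides_iff_norm_divides D x0 y0), (zsqrt_divides_iff_norm_divides D x0 (- y0)),
    Hnorm, Hnorm' by (rewrite ?Hnorm, ?Hnorm'; trivial).
  replace (c * x0 + D * d * - y0) with (c * x0 - D * d * y0) by ring.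
  apply prime_power_divides_exactly_one; [trivial | lia | |].
  - rewrite <- Hnorm. apply norm_divides_conjugate_product. now rewrite Hnorm.
  - apply odd_prime_not_divides_sum_and_diff; trivial.
    intros Hpcx. now destruct (prime_mult p Hp _ _ Hpcx).
Qed.
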